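(* Let $M=(S,\mathrm{Act},P)$ be an MDP, $T\subseteq S$, $\mathrm{rew}\colon S\to\mathbb{R}_{\ge0}$. Let $(x,r)\in[0,\infty]^S\times\mathbb{N}_\infty^S$ satisfy: (1) $D^{\max}(r)\le r$; (2) $E^{\max}(x)\le x$; (3) for all $s\in S$, $x(s)<\infty$ implies $r(s)<\infty$ (inequalities pointwise). Then $\mathbb{E}^{\max}_s(\Diamond T)\le x(s)$ for all $s\in S$.
   Context: An MDP is a tuple $M=(S,\mathrm{Act},P)$ with $S$ finite, $\mathrm{Act}$ finite, $P\colon S\times\mathrm{Act}\times S\to[0,1]$ with $\sum_{s'}P(s,a,s')\in\{0,1\}$; $\mathrm{Act}(s)=\{a\mid\sum_{s'}P(s,a,s')=1\}$ is nonempty for all $s$; $\mathrm{Post}(s,a)=\{s'\mid P(s,a,s')>0\}$. A strategy is $\sigma\colon S\to\mathrm{Act}$ with $\sigma(s)\in\mathrm{Act}(s)$, inducing a Markov chain with transitions $P(s,\sigma(s),\cdot)$. For an infinite path $s_0s_1\ldots$, the accumulated reward is $\sum_{k=0}^{n-1}\mathrm{rew}(s_k)$ with $n=\min\{i\mid s_i\in T\}$ if $T$ is visited, and $\infty$ otherwise; $\mathbb{E}^\sigma_s(\Diamond T)$ is its expectation under $\sigma$ from $s$, and $\mathbb{E}^{\max}_s(\Diamond T)=\max_\sigma\mathbb{E}^\sigma_s(\Diamond T)$. $E^{\max}(x)(s)=0$ for $s\in T$ and $\mathrm{rew}(s)+\max_{a\in\mathrm{Act}(s)}\sum_{s'\in\mathrm{Post}(s,a)}P(s,a,s')x(s')$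 for $s\notin T$, with $p\cdot\infty=\infty$ for $p>0$, $a+\infty=\infty$. $\mathbb{N}_\infty=\mathbb{N}\cup\{\infty\}$, $1+\infty=\infty$; $D^{\max}(r)(s)=0$ for $s\in T$ and $1+\max_{a\in\mathrm{Act}(s)}\min_{s'\in\mathrm{Post}(s,a)}r(s')$ for $s\notin T$. *)

From HB Require Import structures.
From mathcomp Require Import all_boot all_order all_algebra.
From mathcomp Require Import all_classical all_reals all_analysis.
Set Implicit Arguments. Unset Strict Implicit. Unset Printing Implicit Defensive.
Import Order.TTheory GRing.Theory Num.Theory.
Local Open Scope ring_scope.

Section MDP.
Variables (R : realType) (S Act : finType) (P : S -> Act -> S -> R).

Definition is_MDP : Prop :=
  (forall s a s', 0 <= P s a s' <= 1) /\
  (forall s a, \sum_(s' : S) P s a s' = 0 \/ \sum_(s' : S) P s a s' = 1) /\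
  (forall s, exists a, \sum_(s' : S) P s a s' = 1).

Definition enabled (s : S) : pred Act := fun a => \sum_(s' : S) P s a s' == 1.
Definition Post (s : S) (a : Act) : pred S := fun s' => 0 < P s a s'.

Definition strategy (sigma : S -> Act) : Prop := forall s, sigma s \in enabled s.

Variables (T : {set S}) (rew : S -> R).

(* reach sigma k s s' = probability, in the Markov chain induced by sigma,
   of the length-k path prefixes s = s_0 ... s_k = s' with s_0..s_{k-1} not in T. *)
Fixpoint reach (sigma : S -> Act) (k : nat) (s s' : S) : R :=
  match k with
  | 0 => (s == s')%:R
  | k.+1 => if s \in T then 0
            else \sum_(u : S) P s (sigma s) u * reach sigma k u s'
  end.

Local Open Scope ereal_scope.

(* Pr^sigma_s(<> T) = sum over k of the probability that T is first visited at step k *)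
Definition prob_reach (sigma : S -> Act) (s : S) : \bar R :=
  \sum_(0 <= k <oo) (\sum_(s' in T) reach sigma k s s')%R%:E.

(* Paths visiting T contribute
   sum_k E[rew(s_k); k < first visit of T]; paths never visiting T have reward oo
   and contribute oo * Pr(never visit T) (with 0 * oo = 0). *)
Definition exp_rew (sigma : S -> Act) (s : S) : \bar R :=
  \sum_(0 <= k <oo) (\sum_(s' in ~: T) reach sigma k s s' * rew s')%R%:E
  + +oo * (1 - prob_reach sigma s).

(* E^max_s(<> T) = max over strategies (finitely many, so sup = max) *)
Definition exp_rew_max (s : S) : \bar R :=
  ereal_sup [set exp_rew sigma s | sigma in strategy].

Definition Emax_op (x : S -> \bar R) (s : S) : \bar R :=
  if s \in T then 0
  else (rew s)%:E +
       \big[maxe/-oo]_(a | a \in enabled s) \sum_(s' | s' \in Post s a) (P s a s')%:E * x s'.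

End MDP.

(* N_oo = nat + {oo}, with None = oo *)
Definition ninf := option nat.
Definition ninf_le (m n : ninf) : bool :=
  match m, n with
  | _, None => true
  | None, Some _ => false
  | Some a, Some b => (a <= b)%N
  end.
Definition ninf_min (m n : ninf) : ninf := if ninf_le m n then m else n.
Definition ninf_max (m n : ninf) : ninf := if ninf_le m n then n else m.
Definition ninf_succ (m : ninf) : ninf := omap succn m.

Section Dop.
Variables (R : realType) (S Act : finType) (P : S -> Act -> S -> R) (T : {set S}).
Definition Dmax_op (r : S -> ninf) (s : S) : ninf :=
  if s \in T then Some 0%N
  else ninf_succ (\big[ninf_max/Some 0%N]_(a | a \in enabled P s)
                    \big[ninf_min/None]_(s' | s' \in Post P s a) r s').
End Dop.

From HB Require Import structures.
From mathcomp Require Import all_boot all_order all_algebra.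
From mathcomp Require Import all_classical all_reals all_analysis.
Import Order.TTheory GRing.Theory Num.Theory.
Local Open Scope ring_scope.

(* Fix a memoryless strategy sigma.  Unfolding E^max(x) <= x along sigma shows
   by induction that the expected reward collected during the first n steps is
   at most x(s).  It remains to see that T is reached almost surely when
   x(s) < oo, so that the term oo * (1 - Pr(<> T)) vanishes.  States reachable
   from s have finite x, hence finite rank r; D^max(r) <= r provides, under any
   enabled action, a successor of smaller rank, so from each of them T is hit
   within K = max r steps with probability at least c^K, c the least positive
   transition probability.  Avoiding T for n K steps thus has probability at
   most (1 - c^K)^n, which tends to 0. *)

Section NinfBig.

Lemma ninf_le_trans a b c : ninf_le a b -> ninf_le b c -> ninf_le a c.
Proof. by case: a => [a|]; case: b => [b|]; case: c => [c|] //=; exact: leq_trans. Qed.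

Lemma ninf_le_maxl a b c : ninf_le a b -> ninf_le a (ninf_max b c).
Proof. by rewrite /ninf_max; case E: (ninf_le b c) => // h; exact: ninf_le_trans h E. Qed.

Lemma ninf_le_maxr a b c : ninf_le a c -> ninf_le a (ninf_max b c).
Proof.
rewrite /ninf_max; case E: (ninf_le b c) => // h.
apply: ninf_le_trans h _; move: E; case: b => [b|]; case: c => [c|] //=.
by move/negbT; rewrite -ltnNge => /ltnW.
Qed.

Variables (I : eqType) (Q : pred I) (F : I -> ninf).

Lemma ninf_le_bigmax (l : seq I) i :
  i \in l -> Q i -> ninf_le (F i) (\big[ninf_max/Some 0%N]_(j <- l | Q j) F j).
Proof.
elim: l => [|j l IH] //; rewrite inE big_cons => /orP[/eqP <-|il] Qi.
  by rewrite Qi; apply: ninf_le_maxl; case: (F i) => /=.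
by case: (Q j); [apply: ninf_le_maxr|]; exact: IH.
Qed.

Lemma ninf_bigmin_le_Some (l : seq I) m :
  ninf_le (\big[ninf_min/None]_(j <- l | Q j) F j) (Some m) ->
  exists2 i, Q i & exists2 n, F i = Some n & (n <= m)%N.
Proof.
elim: l => [|j l IH]; first by rewrite big_nil.
rewrite big_cons; case Qj: (Q j) => //; rewrite /ninf_min; case: ifP => // _.
by case Fj: (F j) => [n|] //= nm; exists j => //; exists n.
Qed.

End NinfBig.

Lemma Dmax_le_Some (R : realType) (S Act : finType) (P : S -> Act -> S -> R)
    (T : {set S}) (r : S -> ninf) s a j :
  s \notin T -> a \in enabled P s -> ninf_le (Dmax_op P T r s) (Some j) ->
  exists2 u, u \in Post P s a & exists2 i, r u = Some i & (i < j)%N.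
Proof.
rewrite /Dmax_op => /negbTE -> en.
case EM: (\big[_/_]_(b | _) _) => [m|] //= mj.
have := @ninf_le_bigmax _ _ (fun b => \big[ninf_min/None]_(u | u \in Post P s b) r u)
  _ _ (mem_index_enum a) en.
rewrite EM => /ninf_bigmin_le_Some[u Pu [i ru im]].
by exists u => //; exists i => //; exact: leq_ltn_trans im mj.
Qed.
Arguments Dmax_le_Some {R S Act P T r s a j}.

Section Chain.
Variables (R : realType) (S Act : finType) (P : S -> Act -> S -> R) (T : {set S}).
Hypothesis P_ge0 : forall s a t, 0 <= P s a t.
Variable sigma : S -> Act.
Hypothesis sigma_enabled : strategy P sigma.

Local Notation rho := (reach P T sigma).

Lemma reach_ge0 k s t : 0 <= rho k s t.
Proof.
elim: k s => [|k IH] s /=; first by rewrite ler0n.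
by case: (s \in T) => //; apply: sumr_ge0 => u _; exact: mulr_ge0.
Qed.

Lemma sum_reach0 s (g : S -> R) : \sum_t rho 0 s t * g t = g s.
Proof.
rewrite (bigD1 s) //= eqxx mul1r big1 ?addr0 // => t /negbTE.
by rewrite eq_sym => ->; rewrite mul0r.
Qed.

Lemma sum_reachS n s (g : S -> R) :
  \sum_t rho n.+1 s t * g t =
  if s \in T then 0 else \sum_u P s (sigma s) u * \sum_t rho n u t * g t.
Proof.
rewrite /=; case: (s \in T); first by rewrite big1 // => t _; rewrite mul0r.
under eq_bigr do rewrite mulr_suml.
rewrite exchange_big /=; apply: eq_bigr => u _.
by rewrite mulr_sumr; apply: eq_bigr => t _; rewrite mulrA.
Qed.

Lemma reachD n m s t : rho (n + m) s t = \sum_u rho n s u * rho m u t.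
Proof.
elim: n s => [|n IH] s; first by rewrite add0n sum_reach0.
rewrite addSn sum_reachS /=; case: (s \in T) => //.
by apply: eq_bigr => u _; rewrite IH.
Qed.

Definition cumul n (g : S -> R) s := \sum_(k < n) \sum_t rho k s t * g t.

Lemma cumul0 g s : cumul 0 g s = 0.
Proof. by rewrite /cumul big_ord0. Qed.

Lemma cumulS n g s :
  cumul n.+1 g s = g s + (if s \in T then 0 else \sum_u P s (sigma s) u * cumul n g u).
Proof.
rewrite /cumul big_ord_recl /= sum_reach0; congr (_ + _).
under eq_bigr do rewrite /bump /= sum_reachS.
case: (s \in T); first by rewrite big1.
by rewrite exchange_big /=; apply: eq_bigr => u _; rewrite mulr_sumr.
Qed.

Lemma cumul_ge0 n g s : (forall t, 0 <= g t) -> 0 <= cumul n g s.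
Proof.
move=> g_ge0; apply: sumr_ge0 => k _; apply: sumr_ge0 => t _.
exact: mulr_ge0 (reach_ge0 _ _ _) (g_ge0 t).
Qed.

Definition target_ind t : R := (t \in T)%:R.

Definition survive n s := \sum_t rho n s t * (t \notin T)%:R.

Lemma surviveD n m s : survive (n + m) s = \sum_u rho n s u * survive m u.
Proof.
rewrite /survive; under eq_bigr do rewrite reachD mulr_suml.
rewrite exchange_big /=; apply: eq_bigr => u _.
by rewrite mulr_sumr; apply: eq_bigr => t _; rewrite mulrA.
Qed.

Lemma survive_target m u : u \in T -> survive m u = 0.
Proof. by case: m => [|m] uT; rewrite /survive ?sum_reach0 ?sum_reachS uT. Qed.

Lemma survive0_le1 s : survive 0 s <= 1.
Proof. by rewrite /survive sum_reach0; case: (s \notin T). Qed.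

Lemma cumul_target_survive n s : cumul n.+1 target_ind s + survive n s = 1.
Proof.
elim: n s => [|n IH] s; rewrite cumulS /survive ?sum_reach0 ?sum_reachS /target_ind.
  case: (s \in T); first by rewrite !addr0.
  by rewrite big1 ?add0r ?addr0 // => u _; rewrite cumul0 mulr0.
case: (s \in T); first by rewrite !addr0.
rewrite !add0r -big_split /= -[RHS](eqP (sigma_enabled s)); apply: eq_bigr => u _.
by rewrite -mulrDr -[X in _ * X = _]/(cumul n.+1 target_ind u + survive n u) IH mulr1.
Qed.

Lemma cumul_target_le_prob_reach n s :
  ((cumul n target_ind s)%:E <= prob_reach P T sigma s)%E.
Proof.
rewrite /prob_reach; apply: le_trans (nneseries_lim_ge n _); last first.
  by move=> k _ _; rewrite lee_fin; apply: sumr_ge0 => t _; exact: reach_ge0.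
rewrite sumEFin big_mkord lee_fin; apply: ler_sum => k _.
rewrite [leRHS]big_mkcond; apply: ler_sum => t _.
by rewrite /target_ind; case: (t \in T); rewrite ?mulr1 ?mulr0.
Qed.

Section Superharmonic.
Variables (rew : S -> R) (x : S -> \bar R).
Hypothesis rew_ge0 : forall s, 0 <= rew s.
Hypothesis x_ge0 : forall s, (0 <= x s)%E.
Hypothesis Emax_le : forall s, (Emax_op P T rew x s <= x s)%E.

Local Open Scope ereal_scope.

Lemma Emax_strategy_le {s} : s \notin T ->
  (rew s)%:E + \sum_(u | u \in Post P s (sigma s)) (P s (sigma s) u)%:E * x u <= x s.
Proof.
move=> sT; apply: le_trans (Emax_le s); rewrite /Emax_op (negbTE sT) leeD2l //.
exact: le_bigmax_cond (sigma_enabled s).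
Qed.

Lemma post_finite {s u} : s \notin T -> x s < +oo -> (0 < P s (sigma s) u)%R -> x u < +oo.
Proof.
move=> sT xs Pu; rewrite ltey; apply/negP => /eqP xu.
have := Emax_strategy_le sT; rewrite (bigD1 u) //= xu mulry gtr0_sg // mul1e addye.
  by rewrite addey // leye_eq => /eqP xsy; rewrite xsy in xs.
rewrite gt_eqF //; apply: (lt_le_trans (ltNyr 0)); apply: sume_ge0 => v _.
by apply: mule_ge0; rewrite ?lee_fin.
Qed.

Lemma reach_infinite n s u : x s < +oo -> x u = +oo -> (rho n s u = 0)%R.
Proof.
elim: n s => [|n IH] s xs xu /=.
  by case: eqP => // su; move: xs; rewrite su xu ltxx.
case: ifPn => // sT; apply: big1 => v _.
have := P_ge0 s (sigma s) v; rewrite le_eqVlt => /predU1P[<-|Pv]; first by rewrite mul0r.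
by rewrite IH ?mulr0 // (post_finite sT).
Qed.

Lemma cumul_rew_le n s : (cumul n (fun t => (t \notin T)%:R * rew t) s)%:E <= x s.
Proof.
elim: n s => [|n IH] s; first by rewrite cumul0.
rewrite cumulS /=; case: (boolP (s \in T)) => sT.
  by rewrite mul0r addr0.
apply: le_trans (Emax_strategy_le sT).
rewrite EFinD mul1r leeD2l // -sumEFin [leRHS]big_mkcond /= lee_sum // => u _.
case: ifP => Pu; first by rewrite EFinM; apply: lee_wpmul2l; rewrite ?lee_fin.
have -> : (P s (sigma s) u = 0)%R.
  by apply/eqP; rewrite eq_le P_ge0 andbT leNgt; apply: contraFN Pu.
by rewrite mul0r.
Qed.

Lemma exp_rew_partial_sum n s :
  \sum_(0 <= k < n) (\sum_(t in ~: T) rho k s t * rew t)%:E =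
  (cumul n (fun t => (t \notin T)%:R * rew t) s)%:E.
Proof.
rewrite sumEFin big_mkord; congr (_%:E); apply: eq_bigr => k _.
rewrite big_mkcond; apply: eq_bigr => t _.
by rewrite inE; case: (t \in T); rewrite /= ?mul1r ?mul0r ?mulr0.
Qed.

Section Ranking.
Variable r : S -> ninf.
Hypothesis P_le1 : forall s a t, (P s a t <= 1)%R.
Hypothesis Dmax_le : forall s, ninf_le (Dmax_op P T r s) (r s).
Hypothesis finite_rank : forall s, x s < +oo -> r s <> None.

Local Open Scope ring_scope.

(* All transition probabilities lie in [0, 1], so this product is below each
   positive one. *)
Definition pos_prob_lb : R :=
  \prod_(t : S * Act * S | 0 < P t.1.1 t.1.2 t.2) P t.1.1 t.1.2 t.2.

Lemma pos_prob_lb_gt0 : 0 < pos_prob_lb.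
Proof. by apply: prodr_gt0 => t. Qed.

Lemma pos_prob_lb_le1 : pos_prob_lb <= 1.
Proof. by rewrite prodr_ile1 // => t _; rewrite P_ge0 P_le1. Qed.

Lemma pos_prob_lb_le s a u : 0 < P s a u -> pos_prob_lb <= P s a u.
Proof.
move=> Pu; rewrite /pos_prob_lb (bigD1 (s, a, u)) //=.
by rewrite ger_pMr // prodr_ile1 // => t _; rewrite P_ge0 P_le1.
Qed.

Lemma cumul_target_ge k s j :
  r s = Some j -> (j <= k)%N -> pos_prob_lb ^+ k <= cumul k.+1 target_ind s.
Proof.
have c_ge0 := ltW pos_prob_lb_gt0.
elim: k s j => [|k IH] s j rs jk; rewrite cumulS /target_ind; case: ifPn => sT /=.
- by rewrite addr0.
- have := Dmax_le s; rewrite rs => /(Dmax_le_Some sT (sigma_enabled s))[u _ [i _]].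
  by rewrite ltnNge (leq_trans jk).
- by rewrite addr0 exprn_ile1 ?pos_prob_lb_le1.
have := Dmax_le s; rewrite rs => /(Dmax_le_Some sT (sigma_enabled s))[u Pu [i ru ij]].
have hu := IH u i ru (leq_trans ij jk).
rewrite add0r (bigD1 u) //= exprS ler_wpDr ?ler_pM ?exprn_ge0 //; last exact: pos_prob_lb_le.
by apply: sumr_ge0 => v _; rewrite mulr_ge0 ?cumul_ge0 // => t; rewrite ler0n.
Qed.

Definition horizon : nat := \max_s odflt 0%N (r s).

Definition escape_bound : R := 1 - pos_prob_lb ^+ horizon.

Lemma escape_bound_ge0 : 0 <= escape_bound.
Proof.
by rewrite subr_ge0 exprn_ile1 ?pos_prob_lb_le1 ?(ltW pos_prob_lb_gt0).
Qed.

Lemma escape_bound_lt1 : escape_bound < 1.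
Proof. by rewrite ltrBlDr ltrDl exprn_gt0 ?pos_prob_lb_gt0. Qed.

Lemma survive_horizon_le u :
  (x u < +oo)%E -> survive horizon u <= escape_bound * (u \notin T)%:R.
Proof.
move=> xu; case: (boolP (u \in T)) => uT; first by rewrite survive_target ?mulr0.
case ru: (r u) => [j|]; last by have := finite_rank u xu.
have j_le : (j <= horizon)%N.
  by have := @leq_bigmax _ (fun s => odflt 0%N (r s)) u; rewrite ru.
rewrite mulr1 /escape_bound -(cumul_target_survive horizon u) addrAC lerDr subr_ge0.
exact: cumul_target_ge ru j_le.
Qed.

Lemma survive_decay n s :
  (x s < +oo)%E -> survive (n + horizon) s <= escape_bound * survive n s.
Proof.
move=> xs; rewrite surviveD [survive n s]/survive mulr_sumr; apply: ler_sum => u _.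
have [xu|] := ltP (x u) +oo%E.
  by rewrite mulrCA ler_wpM2l ?reach_ge0 ?survive_horizon_le.
by rewrite leye_eq => /eqP xu; rewrite reach_infinite ?mul0r ?mulr0.
Qed.

Lemma survive_geometric j s :
  (x s < +oo)%E -> survive (j * horizon) s <= escape_bound ^+ j.
Proof.
move=> xs; elim: j => [|j IH]; first by rewrite mul0n expr0 survive0_le1.
rewrite mulSn addnC exprS (le_trans (survive_decay _ _ xs)) //.
by rewrite ler_wpM2l ?escape_bound_ge0.
Qed.

Lemma prob_reach_finite s : (x s < +oo)%E -> (1 <= prob_reach P T sigma s)%E.
Proof.
move=> xs; apply/lee_addgt0Pr => e e0.
have q_lt1 : `|escape_bound| < 1.
  by rewrite ger0_norm ?escape_bound_lt1 ?escape_bound_ge0.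
have [N _ /(_ N (leqnn N))] := cvgr_lt _ (cvg_geometric 1 q_lt1) e e0.
rewrite /= mul1r => qN.
rewrite -(subrK (escape_bound ^+ N) 1) EFinD leeD ?lee_fin ?(ltW qN) //.
apply: le_trans (cumul_target_le_prob_reach (N * horizon).+1 s).
by rewrite lee_fin lerBlDr -(cumul_target_survive (N * horizon) s) lerD2l survive_geometric.
Qed.

Lemma exp_rew_le s : (exp_rew P T rew sigma s <= x s)%E.
Proof.
have [xs|] := ltP (x s) +oo%E; last by rewrite leye_eq => /eqP ->; exact: leey.
apply: le_trans (geeDl _ _) _.
  by apply: mule_ge0_le0 => //; rewrite sube_le0 prob_reach_finite.
apply: lime_le.
  apply: is_cvg_nneseries => k _ _; rewrite lee_fin; apply: sumr_ge0 => t _.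
  by rewrite mulr_ge0 ?reach_ge0.
by apply: nearW => n; rewrite exp_rew_partial_sum cumul_rew_le.
Qed.

End Ranking.

End Superharmonic.

End Chain.

Theorem proposition8 (R : realType) (S Act : finType) (P : S -> Act -> S -> R)
  (T : {set S}) (rew : S -> R) (x : S -> \bar R) (r : S -> ninf) :
  is_MDP P ->
  (forall s, 0 <= rew s) ->
  (forall s, (0 <= x s)%E) ->
  (forall s, ninf_le (Dmax_op P T r s) (r s)) ->
  (forall s, (Emax_op P T rew x s <= x s)%E) ->
  (forall s, (x s < +oo)%E -> r s <> None) ->
  forall s, (exp_rew_max P T rew s <= x s)%E.
Proof.
move=> [P_01 _] rew_ge0 x_ge0 Dmax_le Emax_le finite_rank s.
have P_ge0 u a t : 0 <= P u a t by case/andP: (P_01 u a t).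
have P_le1 u a t : P u a t <= 1 by case/andP: (P_01 u a t).
apply: ge_ereal_sup => _ [sigma sigma_enabled <-].
exact: exp_rew_le _ _ _ _ _ P_ge0 _ sigma_enabled _ _ rew_ge0 x_ge0 Emax_le _ P_le1
  Dmax_le finite_rank s.
Qed.
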